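(* Let $d\ge3$. Suppose that $\det H(X,Y)\ne0$ for every generic pair $(X,Y)$ of matrices in $M_d(\mathbb{C})$. Then $H(X,Y)$ is positive semidefinite for all $X,Y\in M_d(\mathbb{C})$. Here $H(X,Y)$ is the hermitian matrix of order $2d^2$ given by $H=H_1-\tfrac12(H_2+H_3)+\tfrac14H_4$ with $$H_1=\begin{bmatrix}\|X\|^2&\operatorname{tr}(X^\dagger Y)\\ \operatorname{tr}(Y^\dagger X)&\|Y\|^2\end{bmatrix}\otimes I_{d^2},\qquad H_2=\begin{bmatrix}X^\dagger X&X^\dagger Y\\ Y^\dagger X&Y^\dagger Y\end{bmatrix}\otimes I_d,$$ $$H_3=\begin{bmatrix}I_d\otimes X^*X^T&I_d\otimes X^*Y^T\\ I_d\otimes Y^*X^T&I_d\otimes Y^*Y^T\end{bmatrix},\qquad H_4=\begin{bmatrix}\tilde X^*\tilde X^T&\tilde X^*\tilde Y^T\\ \tilde Y^*\tilde X^T&\tilde Y^*\tilde Y^T\end{bmatrix}.$$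
   Context: A pair $(X,Y)$ of matrices in $M_d(\mathbb{C})$ is generic if $X$ and $Y$ are linearly independent and some linear combination of $X$ and $Y$ is nonsingular. $Z^*$ is the entrywise complex conjugate, $Z^T$ the transpose, $Z^\dagger$ the conjugate transpose, $\|Z\|^2=\operatorname{tr}(Z^\dagger Z)$, $I_m$ the identity matrix of order $m$, and $A\otimes B=[a_{ij}B]$ for $A=[a_{ij}]$. For a matrix $Z$, $\tilde Z$ is the column vector obtained by stacking the columns of $Z$ one below the other, starting with the first. *)

From HB Require Import structures.
From mathcomp Require Import all_boot all_order all_algebra.
From mathcomp Require Import reals.
From mathcomp Require Export complex.
Set Implicit Arguments.
Unset Strict Implicit.
Unset Printing Implicit Defensive.
Import Order.TTheory GRing.Theory Num.Theory.
Local Open Scope ring_scope.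

Lemma ord_div_proof m p (i : 'I_(m * p)) : (i %/ p < m)%N.
Proof.
move: i; case: p => [|p] i; first by case: i => k; rewrite muln0.
by rewrite ltn_divLR // ltn_ord.
Qed.
Lemma ord_mod_proof m p (i : 'I_(m * p)) : (i %% p < p)%N.
Proof.
move: i; case: p => [|p] i; last by rewrite ltn_mod.
by case: i => k; rewrite muln0.
Qed.
Definition ord_div m p (i : 'I_(m * p)) : 'I_m := Ordinal (ord_div_proof i).
Definition ord_mod m p (i : 'I_(m * p)) : 'I_p := Ordinal (ord_mod_proof i).

Definition kron (C : pzRingType) m n p q (A : 'M[C]_(m, n)) (B : 'M[C]_(p, q))
  : 'M[C]_(m * p, n * q) :=
  \matrix_(i, j) (A (ord_div i) (ord_div j) * B (ord_mod i) (ord_mod j)).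

Section Defs.
Variable R : realType.
Local Notation C := (R[i]).

Definition cconj m n (Z : 'M[C]_(m, n)) : 'M[C]_(m, n) := map_mx Num.conj Z.
Definition adj m n (Z : 'M[C]_(m, n)) : 'M[C]_(n, m) := (cconj Z)^T.
Definition fnorm2 d (Z : 'M[C]_d) : C := \tr (adj Z *m Z).
(* column stacking: entry k = j*d + i is Z i j *)
Definition vecc d (Z : 'M[C]_d) : 'cV[C]_(d * d) :=
  \col_(k < d * d) Z (ord_mod k) (ord_div k).

Definition generic d (X Y : 'M[C]_d) : Prop :=
  (forall a b : C, a *: X + b *: Y = 0 -> a = 0 /\ b = 0) /\
  (exists a b : C, \det (a *: X + b *: Y) != 0).

Definition psd n (M : 'M[C]_n) : Prop :=
  forall v : 'cV[C]_n, 0 <= (adj v *m M *m v) 0 0.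

Lemma size_eq1 d : (2 * (d * d) = d * d + d * d)%N.
Proof. by rewrite mul2n -addnn. Qed.
Lemma size_eq2 d : ((d + d) * d = d * d + d * d)%N.
Proof. by rewrite mulnDl. Qed.

Definition H1 d (X Y : 'M[C]_d) : 'M[C]_(d * d + d * d) :=
  castmx (size_eq1 d, size_eq1 d)
    (kron (\matrix_(i < 2, j < 2)
             nth 0 (nth [::] [:: [:: fnorm2 X; \tr (adj X *m Y)];
                                 [:: \tr (adj Y *m X); fnorm2 Y]] i) j)
          (1%:M : 'M[C]_(d * d))).

Definition H2 d (X Y : 'M[C]_d) : 'M[C]_(d * d + d * d) :=
  castmx (size_eq2 d, size_eq2 d)
    (kron (block_mx (adj X *m X) (adj X *m Y) (adj Y *m X) (adj Y *m Y))
          (1%:M : 'M[C]_d)).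

Definition H3 d (X Y : 'M[C]_d) : 'M[C]_(d * d + d * d) :=
  block_mx (kron (1%:M : 'M[C]_d) (cconj X *m X^T))
           (kron (1%:M : 'M[C]_d) (cconj X *m Y^T))
           (kron (1%:M : 'M[C]_d) (cconj Y *m X^T))
           (kron (1%:M : 'M[C]_d) (cconj Y *m Y^T)).

Definition H4 d (X Y : 'M[C]_d) : 'M[C]_(d * d + d * d) :=
  block_mx (cconj (vecc X) *m (vecc X)^T) (cconj (vecc X) *m (vecc Y)^T)
           (cconj (vecc Y) *m (vecc X)^T) (cconj (vecc Y) *m (vecc Y)^T).

Definition Hmat d (X Y : 'M[C]_d) : 'M[C]_(d * d + d * d) :=
  H1 X Y - 2^-1 *: (H2 X Y + H3 X Y) + 4^-1 *: H4 X Y.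

End Defs.

(* Along the pairs (E + z (X - E), F + z (Y - F)), with E = e_00 and F = I - E,
   the product of det of the sum and of a 2x2 diagonal minor is a polynomial in
   z that does not vanish at z = 0.  Hence for a suitable s every pair on the
   complex arc z = t + i s t (1 - t), 0 <= t < 1, is generic, and H is
   nonsingular there, while H(E, F) at t = 0 is positive semidefinite.
   The entries of H depend Lipschitz-continuously on t, so the set of t where H
   is positive semidefinite is closed, and it is open at every t < 1, since a
   nonsingular positive semidefinite matrix satisfies v^dagger H v >= c |v|_1^2.
   Real induction then carries positivity to t = 1. *)

From HB Require Import structures.
From mathcomp Require Import all_boot all_order all_algebra.
From mathcomp Require Import boolp classical_sets reals complex.
From mathcomp Require Import ring lra.
Import Order.TTheory GRing.Theory Num.Theory.
Set Implicit Arguments.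
Unset Strict Implicit.
Unset Printing Implicit Defensive.
Local Open Scope ring_scope.

Local Notation normc := Normc.normc.

Lemma quadratic_ge0_le (F : realFieldType) (a N c : F) : 0 <= N -> 0 <= c ->
  (forall y, 0 <= a + 2 * y * N + y ^+ 2 * N * c) -> N <= c * a.
Proof.
move=> N0 c0 hq; have [c00|cpos] := eqVneq c 0.
  rewrite c00 mul0r in hq *; have [-> //|Npos] := eqVneq N 0.
  have := hq (- (a + 1) / (2 * N)).
  rewrite mulr0 addr0 (_ : 2 * _ * N = - (a + 1)); first lra.
  by field; rewrite Npos.
have cp : 0 < c by rewrite lt_def cpos c0.
have := hq (- c^-1); rewrite (_ : (- c^-1) ^+ 2 * N * c = c^-1 * N); last by field.
move=> h; rewrite (_ : N = c * (c^-1 * N)); last by field.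
by rewrite ler_pM2l //; lra.
Qed.

Lemma ler_sum_term (R : numDomainType) (I : finType) (F : I -> R) i :
  (forall j, 0 <= F j) -> F i <= \sum_j F j.
Proof. by move=> F0; rewrite (bigD1 i) //= lerDl sumr_ge0. Qed.

Lemma sqr_sum_le (R : realDomainType) (I : finType) (F : I -> R) K : (forall i, 0 <= F i) ->
  (forall i, F i ^+ 2 <= K) -> (\sum_i F i) ^+ 2 <= #|I|%:R ^+ 2 * K.
Proof.
move=> F0 FK; have -> : #|I|%:R ^+ 2 * K = \sum_(i : I) \sum_(j : I) K.
  by rewrite !sumr_const mulrC -mulrnA -(mulr_natr K) natrM expr2.
rewrite expr2 mulr_suml; apply: ler_sum => i _; rewrite mulr_sumr; apply: ler_sum => j _.
have := sqr_ge0 (F i - F j); have := FK i; have := FK j.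
rewrite !expr2 => h1 h2 h3; nra.
Qed.

Lemma real_induction01 (R : realType) (P : R -> Prop) : P 0 ->
  (forall t, 0 <= t < 1 -> P t -> exists2 u, t < u <= 1 & forall s, t < s <= u -> P s) ->
  (forall t, 0 < t <= 1 -> (forall s, 0 <= s < t -> P s) -> P t) ->
  forall t, 0 <= t <= 1 -> P t.
Proof.
move=> P0 Popen Pclosed.
pose A : set R := fun t => t <= 1 /\ forall s, 0 <= s <= t -> P s.
have A0 : A 0.
  split=> [|s /andP[s0 s0']]; first exact: ler01.
  by have -> : s = 0 by apply/eqP; rewrite eq_le s0 s0'.
have supA : has_sup A by split; [exists 0 | exists 1 => x []].
set ts := sup A.
have ts0 : 0 <= ts := sup_upper_bound supA A0.
have ts1 : ts <= 1 by apply: ge_sup => [|x []]; first by exists 0.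
have below s : 0 <= s < ts -> P s.
  move=> /andP[s0 sts]; have e0 : 0 < ts - s by rewrite subr_gt0.
  have [x [_ Px] ltx] := sup_adherent e0 supA.
  by apply: Px; rewrite s0 ltW //; rewrite -/ts opprB addrC subrK in ltx.
have upto s : 0 <= s <= ts -> P s.
  move=> /andP[s0 sts]; have [lts|] := ltP s ts; first by apply: below; rewrite s0.
  move=> tss; have -> : s = ts by apply/eqP; rewrite eq_le sts tss.
  by have [->|tsn0] := eqVneq ts 0; last by apply: Pclosed; rewrite ?lt_def ?tsn0 ?ts0 ?ts1.
have ts_eq1 : ts = 1.
  apply/eqP; rewrite eq_le ts1 leNgt; apply/negP => lt1.
  have [u /andP[tsu u1] Pu] : exists2 u, ts < u <= 1 & forall s, ts < s <= u -> P s.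
    by apply: Popen; [rewrite ts0 | apply: upto; rewrite ts0 lexx].
  suff : A u by move/(sup_upper_bound supA); rewrite leNgt tsu.
  split=> // s /andP[s0 su]; have [sts|tss] := leP s ts; first by apply: upto; rewrite s0.
  by apply: Pu; rewrite tss.
by move=> t /andP[t0 t1]; apply: upto; rewrite t0 ts_eq1.
Qed.

Section ComplexModulus.
Variable R : rcfType.
Implicit Types (x y : R[i]) (r : R).

Lemma normc_ge0 x : 0 <= normc x.
Proof. by case: x => a b; rewrite /= sqrtr_ge0. Qed.

Lemma normcJ x : normc (Num.conj x) = normc x.
Proof. by case: x => a b; rewrite /= sqrrN. Qed.

Lemma normc_eq0 x : (normc x == 0) = (x == 0).
Proof. by apply/eqP/eqP => [/Normc.eq0_normc //|->]; exact: Normc.normc0. Qed.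

Lemma normc_real r : normc r%:C%C = `|r|.
Proof. by rewrite /= expr0n /= addr0 sqrtr_sqr. Qed.

Lemma mulcJ_normc x : x * Num.conj x = (normc x ^+ 2)%:C%C.
Proof.
case: x => a b; rewrite /= sqr_sqrtr ?addr_ge0 ?sqr_ge0 //.
by simpc; rewrite -!expr2 [b * a]mulrC addNr.
Qed.

(* The next two lemmas are instances of [rmorphM], restated with the heads
   [Num.conj] and [_%:C] so that they can rewrite terms where the generic
   morphism lemmas fail to match. *)
Lemma conjcMr r x : Num.conj (r%:C%C * x) = r%:C%C * Num.conj x.
Proof.
case: x => a b; apply/eqP; rewrite eq_complex /= !mul0r.
by apply/andP; split; apply/eqP; ring.
Qed.

Lemma real_complexM r s : (r * s)%:C%C = r%:C%C * s%:C%C :> R[i].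
Proof. exact: rmorphM. Qed.

Lemma normc_sum (I : finType) (F : I -> R[i]) :
  normc (\sum_i F i) <= \sum_i normc (F i).
Proof.
elim/big_rec2: _ => [|i y x _ h]; first by rewrite Normc.normc0.
by apply: le_trans (le_normcD _ _) _; rewrite lerD2l.
Qed.

(* When rewriting over a [realType], [R] must be passed explicitly: [(@ReD R)]. *)
Lemma ReD x y : complex.Re (x + y) = complex.Re x + complex.Re y.
Proof. by case: x; case: y. Qed.

Lemma ReN x : complex.Re (- x) = - complex.Re x.
Proof. by case: x. Qed.

Lemma ReMr r x : complex.Re (r%:C%C * x) = r * complex.Re x.
Proof. by case: x => a b /=; rewrite mul0r subr0. Qed.

Lemma Re_ge_normcN x : - normc x <= complex.Re x.
Proof.
suff: `|complex.Re x| <= normc x by rewrite ler_norml => /andP[].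
case: x => a b /=; rewrite -(sqrtr_sqr a) ler_sqrt ?addr_ge0 ?sqr_ge0 //.
by rewrite lerDl sqr_ge0.
Qed.

Lemma Re_le_normc x : complex.Re x <= normc x.
Proof. by rewrite -lerN2 -ReN -normcN Re_ge_normcN. Qed.

Lemma ge0_complexRe x : Num.conj x = x -> (0 <= x) = (0 <= complex.Re x).
Proof.
case: x => a b /= [hb]; have -> : b = 0.
  by apply/eqP; move: (mulrn_eq0 b 2); rewrite mulr2n -{1}hb addNr eqxx.
by rewrite lecE /= eqxx.
Qed.

End ComplexModulus.

Section ConjugateTranspose.
Variable R : realType.
Local Notation C := R[i].

Lemma adjE m p (A : 'M[C]_(m, p)) i j : adj A i j = Num.conj (A j i).
Proof. by rewrite !mxE. Qed.

Lemma adjD m p (A B : 'M[C]_(m, p)) : adj (A + B) = adj A + adj B.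
Proof. by apply/matrixP => i j; rewrite !mxE rmorphD. Qed.

Lemma adjN m p (A : 'M[C]_(m, p)) : adj (- A) = - adj A.
Proof. by apply/matrixP => i j; rewrite !mxE rmorphN. Qed.

Lemma adjZ m p (a : C) (A : 'M[C]_(m, p)) : adj (a *: A) = Num.conj a *: adj A.
Proof. by apply/matrixP => i j; rewrite !mxE rmorphM. Qed.

Lemma adjM m p q (A : 'M[C]_(m, p)) (B : 'M[C]_(p, q)) :
  adj (A *m B) = adj B *m adj A.
Proof.
apply/matrixP => i j; rewrite !mxE rmorph_sum; apply: eq_bigr => k _.
by rewrite !mxE rmorphM mulrC.
Qed.

Lemma adjK m p (A : 'M[C]_(m, p)) : adj (adj A) = A.
Proof. by apply/matrixP => i j; rewrite !mxE conjCK. Qed.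

Lemma adj1 m : adj (1%:M : 'M[C]_m) = 1%:M.
Proof. by apply/matrixP => i j; rewrite adjE !mxE rmorph_nat eq_sym. Qed.

Lemma adj_cconj m p (A : 'M[C]_(m, p)) : adj (cconj A) = A^T.
Proof. by apply/matrixP => i j; rewrite adjE !mxE conjCK. Qed.

Lemma adj_trmx m p (A : 'M[C]_(m, p)) : adj A^T = cconj A.
Proof. by apply/matrixP => i j; rewrite adjE !mxE. Qed.

Lemma adj_castmx m p m' p' (e1 : m = m') (e2 : p = p') (A : 'M[C]_(m, p)) :
  adj (castmx (e1, e2) A) = castmx (e2, e1) (adj A).
Proof. by apply/matrixP => i j; rewrite adjE !castmxE adjE. Qed.

Lemma adj_kron m p m' p' (A : 'M[C]_(m, p)) (B : 'M[C]_(m', p')) :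
  adj (kron A B) = kron (adj A) (adj B).
Proof. by apply/matrixP => i j; rewrite adjE !mxE rmorphM. Qed.

Lemma adj_block_mx m1 m2 p1 p2 (A : 'M[C]_(m1, p1)) (B : 'M[C]_(m1, p2))
  (D : 'M[C]_(m2, p1)) (E : 'M[C]_(m2, p2)) :
  adj (block_mx A B D E) = block_mx (adj A) (adj D) (adj B) (adj E).
Proof. by rewrite /adj /cconj map_block_mx tr_block_mx. Qed.

Lemma mxtrace_adj m (A : 'M[C]_m) : \tr (adj A) = Num.conj (\tr A).
Proof. by rewrite rmorph_sum; apply: eq_bigr => i _; rewrite adjE. Qed.

End ConjugateTranspose.

Section SesquilinearForms.
Variable R : realType.
Local Notation C := R[i].
Variable n : nat.
Implicit Types (A B : 'M[C]_n) (u v w : 'cV[C]_n).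

Definition mxform A u w : C := (adj u *m A *m w) 0 0.
Definition hermitian_mx A := adj A = A.

Lemma mxformDl A u1 u2 w : mxform A (u1 + u2) w = mxform A u1 w + mxform A u2 w.
Proof. by rewrite /mxform adjD !mulmxDl mxE. Qed.

Lemma mxformDr A u w1 w2 : mxform A u (w1 + w2) = mxform A u w1 + mxform A u w2.
Proof. by rewrite /mxform mulmxDr mxE. Qed.

Lemma mxformZl A a u w : mxform A (a *: u) w = Num.conj a * mxform A u w.
Proof. by rewrite /mxform adjZ -!scalemxAl mxE. Qed.

Lemma mxformZr A a u w : mxform A u (a *: w) = a * mxform A u w.
Proof. by rewrite /mxform -scalemxAr mxE. Qed.

Lemma mxform_add A B u w : mxform (A + B) u w = mxform A u w + mxform B u w.
Proof. by rewrite /mxform mulmxDr mulmxDl mxE. Qed.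

Lemma mxform_scale a A u w : mxform (a *: A) u w = a * mxform A u w.
Proof. by rewrite /mxform -scalemxAr -scalemxAl mxE. Qed.

Lemma mxform_sub A B u w : mxform (A - B) u w = mxform A u w - mxform B u w.
Proof. by rewrite /mxform mulmxBr mulmxBl !mxE. Qed.

Lemma hermitian_mxformC A u w : hermitian_mx A -> mxform A w u = Num.conj (mxform A u w).
Proof.
move=> hA; rewrite -[in LHS]hA /mxform.
have -> : Num.conj ((adj u *m A *m w) 0 0) = adj (adj u *m A *m w) 0 0 by rewrite !mxE.
by rewrite !adjM adjK mulmxA.
Qed.

Lemma psd_Re_ge0 A v : hermitian_mx A -> psd A -> 0 <= complex.Re (mxform A v v).
Proof. by move=> hA /(_ v); rewrite ge0_complexRe // -hermitian_mxformC. Qed.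

Lemma Re_ge0_psd A : hermitian_mx A ->
  (forall v, 0 <= complex.Re (mxform A v v)) -> psd A.
Proof.
move=> hA h v; rewrite -[_ 0 0]/(mxform A v v) ge0_complexRe //.
by rewrite -hermitian_mxformC.
Qed.

Lemma mxform_deltal A i v : mxform A (delta_mx i 0) v = (A *m v) i 0.
Proof.
rewrite /mxform -mulmxA mxE (bigD1 i) //= big1 ?addr0.
  by rewrite !mxE !eqxx rmorph1 mul1r.
by move=> k /negbTE ki; rewrite !mxE ki rmorph0 mul0r.
Qed.

Lemma mxform_delta A i : mxform A (delta_mx i 0) (delta_mx i 0) = A i i.
Proof.
rewrite mxform_deltal mxE (bigD1 i) //= big1 ?addr0; first by rewrite !mxE !eqxx mulr1.
by move=> k /negbTE ki; rewrite !mxE ki mulr0.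
Qed.

Lemma mxform_gram_ge0 m (G : 'M[C]_(m, n)) v : 0 <= mxform (adj G *m G) v v.
Proof.
rewrite /mxform mulmxA -adjM -mulmxA mxE; apply: sumr_ge0 => k _.
by rewrite adjE mulrC mulcJ_normc ler0c exprn_ge0 ?normc_ge0.
Qed.

Lemma mxform_diag_ge0 A v : (forall i j, i != j -> A i j = 0) ->
  (forall i, 0 <= A i i) -> 0 <= mxform A v v.
Proof.
move=> A0 Aii; rewrite /mxform -mulmxA mxE; apply: sumr_ge0 => i _.
rewrite [(A *m v) i 0]mxE (bigD1 i) //= big1 ?addr0; last first.
  by move=> k ki; rewrite A0 ?mul0r // eq_sym.
rewrite adjE mulrCA mulr_ge0 // mulrC mulcJ_normc ler0c.
by rewrite exprn_ge0 ?normc_ge0.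
Qed.

End SesquilinearForms.

Section Coercivity.
Variable R : realType.
Local Notation C := R[i].
Variable n : nat.
Implicit Types (A : 'M[C]_n) (v : 'cV[C]_n).

Lemma psd_cauchy_schwarz A v i : hermitian_mx A -> psd A ->
  normc ((A *m v) i 0) ^+ 2 <= complex.Re (A i i) * complex.Re (mxform A v v).
Proof.
move=> hA pA; set b := (A *m v) i 0; set e : 'cV[C]_n := delta_mx i 0.
apply: quadratic_ge0_le; [exact: sqr_ge0 | by rewrite -(mxform_delta A) psd_Re_ge0 |].
move=> y; set N := normc b ^+ 2.
have bbJ : b * Num.conj b = N%:C%C by exact: mulcJ_normc.
have formvJ : mxform A v e = Num.conj b by rewrite hermitian_mxformC // mxform_deltal.
pose w := v + (y%:C%C * b) *: e.
suff -> : complex.Re (mxform A v v) + 2 * y * N + y ^+ 2 * N * complex.Re (A i i) =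
  complex.Re (mxform A w w) by exact: psd_Re_ge0.
have -> : mxform A w w =
    mxform A v v + y%:C%C * (b * Num.conj b) *+ 2 + y%:C%C * y%:C%C * (b * Num.conj b) * A i i.
  rewrite /w !(mxformDl, mxformDr) !(mxformZl, mxformZr) formvJ mxform_deltal mxform_delta.
  by rewrite -/b conjcMr; ring.
by rewrite bbJ -!real_complexM !(@ReD R) (@ReMr R) /=; ring.
Qed.

Definition l1norm m (u : 'cV[C]_m) : R := \sum_i normc (u i 0).
Definition mx_bound m p (A : 'M[C]_(m, p)) : R :=
  1 + \sum_(k : 'I_m * 'I_p) normc (A k.1 k.2).

Lemma l1norm_ge0 m (u : 'cV[C]_m) : 0 <= l1norm u.
Proof. by apply: sumr_ge0 => i _; exact: normc_ge0. Qed.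

Lemma l1normZ m a (u : 'cV[C]_m) : l1norm (a *: u) = normc a * l1norm u.
Proof. by rewrite /l1norm mulr_sumr; apply: eq_bigr => i _; rewrite mxE Normc.normcM. Qed.

Lemma normc_le_mx_bound m p (A : 'M[C]_(m, p)) i j : normc (A i j) <= mx_bound A.
Proof.
apply: (ler_wpDl ler01).
by apply: (@ler_sum_term _ _ (fun k => normc (A k.1 k.2)) (i, j)) => k; exact: normc_ge0.
Qed.

Lemma mx_bound_ge1 m p (A : 'M[C]_(m, p)) : 1 <= mx_bound A.
Proof. by rewrite lerDl sumr_ge0 // => k _; exact: normc_ge0. Qed.

Lemma normc_mulmx_le m p (A : 'M[C]_(m, p)) (u : 'cV[C]_p) i K :
  (forall k, normc (A i k) <= K) -> normc ((A *m u) i 0) <= K * l1norm u.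
Proof.
move=> AK; rewrite mxE; apply: le_trans (normc_sum _) _; rewrite /l1norm mulr_sumr.
by apply: ler_sum => k _; rewrite Normc.normcM ler_wpM2r ?normc_ge0.
Qed.

Lemma l1norm_mulmx_le m p (A : 'M[C]_(m, p)) (u : 'cV[C]_p) :
  l1norm (A *m u) <= m%:R * (mx_bound A * l1norm u).
Proof.
have Au i := normc_mulmx_le u (normc_le_mx_bound A i).
by apply: le_trans (ler_sum _ (fun i _ => Au i)) _; rewrite sumr_const card_ord mulr_natl.
Qed.

(* [\adj A *m A = \det A], so [v] is controlled by [A *m v], whose entries are
   controlled by the form through [psd_cauchy_schwarz]. *)
Lemma psd_coercive A : hermitian_mx A -> psd A -> \det A != 0 ->
  exists2 c, 0 < c & forall v, c * l1norm v ^+ 2 <= complex.Re (mxform A v v).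
Proof.
move=> hA pA detA; set M := mx_bound A; set nd := normc (\det A).
set K := (n%:R * mx_bound (\adj A)) ^+ 2 * (n%:R ^+ 2 * M).
have M0 : 0 <= M := le_trans ler01 (mx_bound_ge1 A).
have K0 : 0 <= K by rewrite /K mulr_ge0 ?sqr_ge0 ?mulr_ge0 ?sqr_ge0.
have nd0 : 0 < nd by rewrite lt_def normc_eq0 detA normc_ge0.
exists (nd ^+ 2 / (K + 1)); first by rewrite divr_gt0 ?exprn_gt0 // ltr_wpDl.
move=> v; set a := complex.Re (mxform A v v); set u := A *m v.
have a0 : 0 <= a by exact: psd_Re_ge0.
have Su : l1norm u ^+ 2 <= n%:R ^+ 2 * (M * a).
  rewrite -[n in n%:R]card_ord; apply: sqr_sum_le => [i|i]; first exact: normc_ge0.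
  apply: le_trans (psd_cauchy_schwarz _ _ hA pA) _; rewrite ler_wpM2r //.
  exact: le_trans (Re_le_normc _) (normc_le_mx_bound _ _ _).
have Sv : nd * l1norm v <= n%:R * mx_bound (\adj A) * l1norm u.
  rewrite -l1normZ -mul_scalar_mx -mul_adj_mx -mulmxA -mulrA.
  exact: l1norm_mulmx_le.
have {Su Sv} Sv2 : (nd * l1norm v) ^+ 2 <= K * a.
  apply: le_trans (_ : (n%:R * mx_bound (\adj A) * l1norm u) ^+ 2 <= _).
    by rewrite !expr2; apply: ler_pM; rewrite // mulr_ge0 ?l1norm_ge0 ?ltW.
  by rewrite exprMn /K -mulrA ler_wpM2l ?sqr_ge0 // -mulrA.
rewrite mulrAC ler_pdivrMr ?ltr_wpDl // -exprMn mulrDr mulr1.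
by apply: le_trans Sv2 _; rewrite mulrC lerDl.
Qed.

End Coercivity.

Section PsdPath.
Variable R : realType.
Local Notation C := R[i].
Variable n : nat.
Implicit Types v : 'cV[C]_n.

Lemma normc_mxform_le (E : 'M[C]_n) v e : (forall i j, normc (E i j) <= e) ->
  normc (mxform E v v) <= e * l1norm v ^+ 2.
Proof.
move=> Ee; rewrite expr2 mulrCA {1}/l1norm mulr_suml /mxform -mulmxA mxE.
apply: le_trans (normc_sum _) _; apply: ler_sum => i _.
by rewrite Normc.normcM adjE normcJ ler_wpM2l ?normc_ge0 ?normc_mulmx_le.
Qed.

Lemma Re_mxform_perturb (A B : 'M[C]_n) v e : (forall i j, normc (B i j - A i j) <= e) ->
  complex.Re (mxform A v v) - e * l1norm v ^+ 2 <= complex.Re (mxform B v v).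
Proof.
move=> BAe; have -> : mxform B v v = mxform A v v + mxform (B - A) v v.
  by rewrite mxform_sub addrC subrK.
rewrite (@ReD R) lerD2l.
apply: le_trans (Re_ge_normcN _); rewrite lerN2.
by apply: normc_mxform_le => i j; rewrite !mxE.
Qed.

Variables (Hf : R -> 'M[C]_n) (L : R).
Hypothesis Hf_herm : forall t, hermitian_mx (Hf t).
Hypothesis L_ge0 : 0 <= L.
Hypothesis Hf_lipschitz : forall s t i j, 0 <= s <= 1 -> 0 <= t <= 1 ->
  normc (Hf s i j - Hf t i j) <= L * `|s - t|.
Hypothesis Hf_det : forall t, 0 <= t < 1 -> \det (Hf t) != 0.

Lemma psd_path_open t : 0 <= t < 1 -> psd (Hf t) ->
  exists2 u, t < u <= 1 & forall s, t < s <= u -> psd (Hf s).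
Proof.
move=> /[dup] t01 /andP[t0 t1] pt.
have [c c0 coer] := psd_coercive (Hf_herm t) pt (Hf_det t01).
have cL0 : 0 < c / (L + 1) by rewrite divr_gt0 // ltr_wpDl.
exists (Num.min 1 (t + c / (L + 1))); first by rewrite lt_min t1 ltrDl cL0 ge_min lexx.
move=> s /andP[ts]; rewrite le_min => /andP[s1 stc].
apply: Re_ge0_psd => // v; have := coer v.
have /(Re_mxform_perturb v) : forall i j, normc (Hf s i j - Hf t i j) <= c.
  move=> i j; apply: le_trans (Hf_lipschitz i j _ _) _.
  - by rewrite s1 (le_trans t0 (ltW ts)).
  - by rewrite t0 ltW.
  rewrite ger0_norm ?subr_ge0 ?(ltW ts) //.
  apply: le_trans (_ : L * (c / (L + 1)) <= c); first by rewrite ler_wpM2l // lerBlDl.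
  by rewrite mulrA ler_pdivrMr ?ltr_wpDl // mulrDr mulr1 [c * L]mulrC lerDl ltW.
lra.
Qed.

Lemma psd_path_closed t : 0 < t <= 1 -> (forall s, 0 <= s < t -> psd (Hf s)) ->
  psd (Hf t).
Proof.
move=> /andP[t0 t1] before; apply: Re_ge0_psd => // v.
set q := l1norm v ^+ 2; have q0 : 0 <= q := sqr_ge0 _.
apply/ler_addgt0Pr => e e0.
have Lq1 : 0 < L * q + 1 by apply: ltr_wpDl; [exact: mulr_ge0 | exact: ltr01].
set d := e / (L * q + 1); have d0 : 0 < d by rewrite divr_gt0.
pose s := Num.max 0 (t - d).
have s0 : 0 <= s by rewrite le_max lexx.
have st : s < t by rewrite gt_max t0 ltrBlDr ltrDl d0.
have /(Re_mxform_perturb v) : forall i j, normc (Hf t i j - Hf s i j) <= L * d.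
  move=> i j; apply: le_trans (Hf_lipschitz i j _ _) _.
  - by rewrite ltW.
  - by rewrite s0 (le_trans (ltW st)).
  rewrite ler_wpM2l // ger0_norm ?subr_ge0 ?(ltW st) //.
  by rewrite lerBlDr addrC -lerBlDr le_max lexx orbT.
have : L * d * q <= e.
  have -> : L * d * q = e * (L * q / (L * q + 1)) by rewrite /d; field; rewrite gt_eqF.
  by rewrite ger_pMr // ler_pdivrMr // mul1r lerDl.
have : 0 <= complex.Re (mxform (Hf s) v v).
  by apply: psd_Re_ge0 => //; apply: before; rewrite s0 st.
rewrite -/q; lra.
Qed.

Lemma psd_path_end : psd (Hf 0) -> psd (Hf 1).
Proof.
move=> p0; apply: (real_induction01 (P := fun t => psd (Hf t))) => //;
  [exact: psd_path_open | exact: psd_path_closed | by rewrite ler01 lexx].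
Qed.

End PsdPath.

Section Lipschitz01.
Variable R : realType.
Local Notation C := R[i].

Definition lip01 (f : R -> C) := exists L : R, forall s t,
  0 <= s <= 1 -> 0 <= t <= 1 -> normc (f s - f t) <= L * `|s - t|.

Lemma lip01_ext f g : f =1 g -> lip01 f -> lip01 g.
Proof. by move=> fg [L fL]; exists L => s t; rewrite -!fg; exact: fL. Qed.

Lemma lip01_bounded f : lip01 f ->
  exists M, forall t, 0 <= t <= 1 -> normc (f t) <= M.
Proof.
move=> [L fL]; exists (normc (f 0) + `|L|) => t t01.
rewrite -(subrK (f 0) (f t)) addrC; apply: le_trans (le_normcD _ _) _.
rewrite lerD2l; apply: le_trans (fL _ _ t01 _) _; first by rewrite lexx ler01.
apply: le_trans (ler_norm _) _; rewrite normrM subr0 ler_piMr //.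
by case/andP: t01 => t0 t1; rewrite normr_id ger0_norm.
Qed.

Lemma lip01_cst c : lip01 (fun=> c).
Proof. by exists 0 => s t _ _; rewrite subrr mul0r Normc.normc0. Qed.

Lemma lip01_id : lip01 (fun t => t%:C%C).
Proof. by exists 1 => s t _ _; rewrite mul1r -rmorphB normc_real. Qed.

Lemma lip01D f g : lip01 f -> lip01 g -> lip01 (fun t => f t + g t).
Proof.
move=> [L1 h1] [L2 h2]; exists (L1 + L2) => s t s01 t01.
rewrite opprD addrACA mulrDl; apply: le_trans (le_normcD _ _) _.
exact: lerD (h1 s t s01 t01) (h2 s t s01 t01).
Qed.

Lemma lip01N f : lip01 f -> lip01 (fun t => - f t).
Proof. by move=> [L h]; exists L => s t s01 t01; rewrite -opprD normcN; exact: h. Qed.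

Lemma lip01B f g : lip01 f -> lip01 g -> lip01 (fun t => f t - g t).
Proof. by move=> hf hg; exact: lip01D hf (lip01N hg). Qed.

Lemma lip01M f g : lip01 f -> lip01 g -> lip01 (fun t => f t * g t).
Proof.
move=> /[dup] hf [L1 h1] /[dup] hg [L2 h2].
have [M1 hM1] := lip01_bounded hf; have [M2 hM2] := lip01_bounded hg.
exists (M1 * L2 + L1 * M2) => s t s01 t01.
have -> : f s * g s - f t * g t = f s * (g s - g t) + (f s - f t) * g t by ring.
apply: le_trans (le_normcD _ _) _; rewrite [in X in _ <= X]mulrDl !Normc.normcM.
apply: lerD.
  rewrite -mulrA; apply: ler_pM; [exact: normc_ge0 | exact: normc_ge0 | exact: hM1 | exact: h2].
rewrite mulrAC; apply: ler_pM; [exact: normc_ge0 | exact: normc_ge0 | exact: h1 | exact: hM2].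
Qed.

Lemma lip01J f : lip01 f -> lip01 (fun t => Num.conj (f t)).
Proof. by move=> [L h]; exists L => s t s01 t01; rewrite -rmorphB normcJ; exact: h. Qed.

Lemma lip01_sum (I : finType) (F : I -> R -> C) :
  (forall i, lip01 (F i)) -> lip01 (fun t => \sum_i F i t).
Proof.
move=> hF; elim: (index_enum I) => [|i r ih].
  by apply: lip01_ext (lip01_cst 0) => t; rewrite big_nil.
by apply: lip01_ext (lip01D (hF i) ih) => t; rewrite big_cons.
Qed.

Definition mxlip01 m p (A : R -> 'M[C]_(m, p)) :=
  forall i j, lip01 (fun t => A t i j).

Lemma mxlip01_uniform n (A : R -> 'M[C]_n) : mxlip01 A ->
  exists2 L, 0 <= L & forall s t i j, 0 <= s <= 1 -> 0 <= t <= 1 ->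
    normc (A s i j - A t i j) <= L * `|s - t|.
Proof.
move=> hA; have [Lf hL] := fin_all_exists (fun ij : 'I_n * 'I_n => hA ij.1 ij.2).
exists (\sum_ij `|Lf ij|) => [|s t i j s01 t01]; first exact: sumr_ge0.
apply: le_trans (hL (i, j) s t s01 t01) _; rewrite ler_wpM2r //.
apply: le_trans (ler_norm _) _.
by apply: (@ler_sum_term _ _ (fun ij => `|Lf ij|) (i, j)) => ij.
Qed.

End Lipschitz01.

Section MatrixLipschitz01.
Variable R : realType.
Local Notation C := R[i].

Lemma mxlip01_cst m p (A : 'M[C]_(m, p)) : mxlip01 (fun=> A).
Proof. by move=> i j; exact: lip01_cst. Qed.

Lemma mxlip01D m p (A B : R -> 'M[C]_(m, p)) :
  mxlip01 A -> mxlip01 B -> mxlip01 (fun t => A t + B t).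
Proof. by move=> hA hB i j; apply: lip01_ext (lip01D (hA i j) (hB i j)) => t; rewrite mxE. Qed.

Lemma mxlip01N m p (A : R -> 'M[C]_(m, p)) : mxlip01 A -> mxlip01 (fun t => - A t).
Proof. by move=> hA i j; apply: lip01_ext (lip01N (hA i j)) => t; rewrite mxE. Qed.

Lemma mxlip01B m p (A B : R -> 'M[C]_(m, p)) :
  mxlip01 A -> mxlip01 B -> mxlip01 (fun t => A t - B t).
Proof. by move=> hA hB; exact: mxlip01D hA (mxlip01N hB). Qed.

Lemma mxlip01Z m p (a : R -> C) (A : R -> 'M[C]_(m, p)) :
  lip01 a -> mxlip01 A -> mxlip01 (fun t => a t *: A t).
Proof. by move=> ha hA i j; apply: lip01_ext (lip01M ha (hA i j)) => t; rewrite mxE. Qed.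

Lemma mxlip01M m p q (A : R -> 'M[C]_(m, p)) (B : R -> 'M[C]_(p, q)) :
  mxlip01 A -> mxlip01 B -> mxlip01 (fun t => A t *m B t).
Proof.
move=> hA hB i j; apply: lip01_ext (lip01_sum (fun k => lip01M (hA i k) (hB k j))) => t.
by rewrite mxE.
Qed.

Lemma mxlip01_tr m p (A : R -> 'M[C]_(m, p)) : mxlip01 A -> mxlip01 (fun t => (A t)^T).
Proof. by move=> hA i j; apply: lip01_ext (hA j i) => t; rewrite mxE. Qed.

Lemma mxlip01_cconj m p (A : R -> 'M[C]_(m, p)) : mxlip01 A -> mxlip01 (fun t => cconj (A t)).
Proof. by move=> hA i j; apply: lip01_ext (lip01J (hA i j)) => t; rewrite mxE. Qed.

Lemma mxlip01_adj m p (A : R -> 'M[C]_(m, p)) : mxlip01 A -> mxlip01 (fun t => adj (A t)).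
Proof. by move=> hA; exact/mxlip01_tr/mxlip01_cconj. Qed.

Lemma mxlip01_cast m p m' p' (e : (m = m') * (p = p')) (A : R -> 'M[C]_(m, p)) :
  mxlip01 A -> mxlip01 (fun t => castmx e (A t)).
Proof. by move=> hA i j; apply: lip01_ext (hA _ _) => t; rewrite castmxE. Qed.

Lemma mxlip01_kron m p m' p' (A : R -> 'M[C]_(m, p)) (B : R -> 'M[C]_(m', p')) :
  mxlip01 A -> mxlip01 B -> mxlip01 (fun t => kron (A t) (B t)).
Proof. by move=> hA hB i j; apply: lip01_ext (lip01M (hA _ _) (hB _ _)) => t; rewrite mxE. Qed.

Lemma mxlip01_block m1 m2 p1 p2 (A : R -> 'M[C]_(m1, p1)) (B : R -> 'M[C]_(m1, p2))
    (D : R -> 'M[C]_(m2, p1)) (E : R -> 'M[C]_(m2, p2)) :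
  mxlip01 A -> mxlip01 B -> mxlip01 D -> mxlip01 E ->
  mxlip01 (fun t => block_mx (A t) (B t) (D t) (E t)).
Proof.
move=> hA hB hD hE i j; rewrite -(splitK i) -(splitK j).
case: (split i) => i'; case: (split j) => j';
  [apply: lip01_ext (hA i' j') | apply: lip01_ext (hB i' j')
  |apply: lip01_ext (hD i' j') | apply: lip01_ext (hE i' j')] => t;
  by rewrite /= ?(block_mxEul, block_mxEur, block_mxEdl, block_mxEdr).
Qed.

Lemma mxlip01_vecc d (A : R -> 'M[C]_d) : mxlip01 A -> mxlip01 (fun t => vecc (A t)).
Proof. by move=> hA i j; apply: lip01_ext (hA _ _) => t; rewrite mxE. Qed.

Lemma lip01_trace d (A : R -> 'M[C]_d) : mxlip01 A -> lip01 (fun t => \tr (A t)).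
Proof. by move=> hA; apply: lip01_sum => i; exact: hA. Qed.

Lemma mxlip01_mx22 (a b c e : R -> C) : lip01 a -> lip01 b -> lip01 c -> lip01 e ->
  mxlip01 (fun t => \matrix_(i < 2, j < 2)
                      nth 0 (nth [::] [:: [:: a t; b t]; [:: c t; e t]] i) j).
Proof.
move=> ha hb hc he [[|[|i]] hi] [[|[|j]] hj] //;
  [apply: lip01_ext ha | apply: lip01_ext hb | apply: lip01_ext hc | apply: lip01_ext he] => t;
  by rewrite mxE.
Qed.

Lemma mxlip01_Hmat d (X Y : R -> 'M[C]_d) : mxlip01 X -> mxlip01 Y ->
  mxlip01 (fun t => Hmat (X t) (Y t)).
Proof.
move=> hX hY.
have adjM (Z W : R -> 'M[C]_d) :
    mxlip01 Z -> mxlip01 W -> mxlip01 (fun t => adj (Z t) *m W t).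
  by move=> hZ hW; apply: mxlip01M _ hW; exact: mxlip01_adj.
have cconjT m p (Z W : R -> 'M[C]_(m, p)) :
    mxlip01 Z -> mxlip01 W -> mxlip01 (fun t => cconj (Z t) *m (W t)^T).
  by move=> hZ hW; apply: mxlip01M; [exact: mxlip01_cconj | exact: mxlip01_tr].
have H1L : mxlip01 (fun t => H1 (X t) (Y t)).
  apply: mxlip01_cast; apply: mxlip01_kron _ (mxlip01_cst _).
  by apply: mxlip01_mx22; apply: lip01_trace; exact: adjM.
have H2L : mxlip01 (fun t => H2 (X t) (Y t)).
  apply: mxlip01_cast; apply: mxlip01_kron _ (mxlip01_cst _).
  by apply: mxlip01_block; exact: adjM.
have H3L : mxlip01 (fun t => H3 (X t) (Y t)).
  by apply: mxlip01_block; apply: mxlip01_kron (mxlip01_cst _) _; exact: cconjT.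
have H4L : mxlip01 (fun t => H4 (X t) (Y t)).
  by apply: mxlip01_block; apply: cconjT; exact: mxlip01_vecc.
apply: mxlip01D (mxlip01B H1L _) (mxlip01Z (lip01_cst _) H4L).
exact: mxlip01Z (lip01_cst _) (mxlip01D H2L H3L).
Qed.

End MatrixLipschitz01.

Section HmatHermitian.
Variable R : realType.
Local Notation C := R[i].
Variable d : nat.
Implicit Types X Y : 'M[C]_d.

Lemma H1_hermitian X Y : hermitian_mx (H1 X Y).
Proof.
rewrite /hermitian_mx /H1 adj_castmx adj_kron adj1; congr (castmx _ (kron _ _)).
apply/matrixP => i j; rewrite adjE !mxE.
by case: i => [[|[|i]] hi]; case: j => [[|[|j]] hj] //=;
  rewrite /fnorm2 -mxtrace_adj !adjM adjK.
Qed.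

Lemma H2_hermitian X Y : hermitian_mx (H2 X Y).
Proof. by rewrite /hermitian_mx /H2 adj_castmx adj_kron adj1 adj_block_mx !adjM !adjK. Qed.

Lemma H3_hermitian X Y : hermitian_mx (H3 X Y).
Proof.
by rewrite /hermitian_mx /H3 adj_block_mx !adj_kron !adj1 !adjM !adj_cconj !adj_trmx.
Qed.

Lemma H4_hermitian X Y : hermitian_mx (H4 X Y).
Proof. by rewrite /hermitian_mx /H4 adj_block_mx !adjM !adj_cconj !adj_trmx. Qed.

Lemma Hmat_hermitian X Y : hermitian_mx (Hmat X Y).
Proof.
have invJ k : Num.conj ((k%:R : C)^-1) = (k%:R)^-1 by rewrite fmorphV rmorph_nat.
rewrite /hermitian_mx /Hmat !(adjD, adjN, adjZ, invJ).
by rewrite H1_hermitian H2_hermitian H3_hermitian H4_hermitian.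
Qed.

End HmatHermitian.

Section BasePoint.
Variable R : realType.
Local Notation C := R[i].

Definition diag_within n (A : 'M[C]_n) (lo hi : C) :=
  forall i j, (i != j -> A i j = 0) /\ lo <= A i i <= hi.

Lemma diag_within1 n : diag_within (1%:M : 'M[C]_n) 1 1.
Proof. by move=> i j; rewrite !mxE eqxx lexx; split => // /negbTE ->. Qed.

Lemma diag_within_castmx n n' (e : n = n') (A : 'M[C]_n) lo hi :
  diag_within A lo hi -> diag_within (castmx (e, e) A) lo hi.
Proof.
move=> hA i j; rewrite !castmxE.
by have [? ?] := hA (cast_ord (esym e) i) (cast_ord (esym e) j); split.
Qed.

Lemma ord_divmod_inj m p (i j : 'I_(m * p)) :
  ord_div i = ord_div j -> ord_mod i = ord_mod j -> i = j.
Proof.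
move=> /(congr1 val) /= eq_div /(congr1 val) /= eq_mod; apply: val_inj => /=.
by rewrite (divn_eq i p) (divn_eq j p) eq_div eq_mod.
Qed.

Lemma diag_within_kron m p (A : 'M[C]_m) (B : 'M[C]_p) lo1 hi1 lo2 hi2 :
  0 <= lo1 -> 0 <= lo2 -> diag_within A lo1 hi1 -> diag_within B lo2 hi2 ->
  diag_within (kron A B) (lo1 * lo2) (hi1 * hi2).
Proof.
move=> lo1_ge0 lo2_ge0 hA hB i j; rewrite !mxE; split.
  move=> ij; have [e1|n1] := eqVneq (ord_div i) (ord_div j); last first.
    by rewrite (proj1 (hA _ _) n1) mul0r.
  have [e2|n2] := eqVneq (ord_mod i) (ord_mod j); last by rewrite (proj1 (hB _ _) n2) mulr0.
  by move: ij; rewrite (ord_divmod_inj e1 e2) eqxx.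
have [_ /andP[a1 a2]] := hA (ord_div i) (ord_div i).
have [_ /andP[b1 b2]] := hB (ord_mod i) (ord_mod i).
by rewrite !ler_pM // ?(le_trans lo1_ge0 a1) ?(le_trans lo2_ge0 b1).
Qed.

Lemma diag_within_kron1 m p (A : 'M[C]_m) lo hi : 0 <= lo -> diag_within A lo hi ->
  diag_within (kron A (1%:M : 'M[C]_p)) lo hi.
Proof.
by move=> lo0 hA; have := diag_within_kron lo0 ler01 hA (@diag_within1 p); rewrite !mulr1.
Qed.

Lemma diag_within_1kron m p (A : 'M[C]_p) lo hi : 0 <= lo -> diag_within A lo hi ->
  diag_within (kron (1%:M : 'M[C]_m) A) lo hi.
Proof.
by move=> lo0 hA; have := diag_within_kron ler01 lo0 (@diag_within1 m) hA; rewrite !mul1r.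
Qed.

Lemma diag_within_block m p (A : 'M[C]_m) (D : 'M[C]_p) lo hi :
  diag_within A lo hi -> diag_within D lo hi -> diag_within (block_mx A 0 0 D) lo hi.
Proof.
move=> hA hD i j; rewrite -(splitK i) -(splitK j).
case: (split i) => i'; case: (split j) => j' /=;
  rewrite ?(block_mxEul, block_mxEur, block_mxEdl, block_mxEdr) ?mxE.
- by have [Aij Aii] := hA i' j'; split=> // ij; apply: Aij; apply: contra ij => /eqP ->.
- by have [_ Aii] := hA i' i'.
- by have [_ Dii] := hD i' i'.
- by have [Dij Dii] := hD i' j'; split=> // ij; apply: Dij; apply: contra ij => /eqP ->.
Qed.

Lemma H4_gram d (X Y : 'M[C]_d) :
  H4 X Y = adj (col_mx (vecc X) (vecc Y))^T *m (col_mx (vecc X) (vecc Y))^T.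
Proof. by rewrite adj_trmx /cconj map_col_mx tr_col_mx mul_col_row. Qed.

Lemma kron0 m p m' p' (A : 'M[C]_(m, p)) : kron A (0 : 'M[C]_(m', p')) = 0.
Proof. by apply/matrixP => i j; rewrite !mxE mulr0. Qed.

Variables (d : nat) (i0 : 'I_d).
Hypothesis d_gt1 : (1 < d)%N.

(* At the base pair (base_E, base_F), H1, H2 and H3 are diagonal, with H1 >= 1
   and H2, H3 <= 1 on the diagonal, while H4 is always a Gram matrix. *)
Definition base_E : 'M[C]_d := delta_mx i0 i0.
Definition base_F : 'M[C]_d := 1%:M - base_E.

Lemma cconj_base_E : cconj base_E = base_E.
Proof. by apply/matrixP => i j; rewrite !mxE rmorph_nat. Qed.

Lemma cconj_base_F : cconj base_F = base_F.
Proof. by apply/matrixP => i j; rewrite !mxE rmorphB !rmorph_nat. Qed.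

Lemma tr_base_E : base_E^T = base_E.
Proof. exact: trmx_delta. Qed.

Lemma tr_base_F : base_F^T = base_F.
Proof. by rewrite /base_F linearB /= trmx1 tr_base_E. Qed.

Lemma adj_base_E : adj base_E = base_E.
Proof. by rewrite /adj cconj_base_E tr_base_E. Qed.

Lemma adj_base_F : adj base_F = base_F.
Proof. by rewrite /adj cconj_base_F tr_base_F. Qed.

Lemma base_EE : base_E *m base_E = base_E.
Proof. by rewrite mul_delta_mx. Qed.

Lemma base_EF : base_E *m base_F = 0.
Proof. by rewrite mulmxBr mulmx1 base_EE subrr. Qed.

Lemma base_FE : base_F *m base_E = 0.
Proof. by rewrite mulmxBl mul1mx base_EE subrr. Qed.

Lemma base_FF : base_F *m base_F = base_F.
Proof. by rewrite {1}/base_F mulmxBl mul1mx base_EF subr0. Qed.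

Lemma mxtrace_base_E : \tr base_E = 1.
Proof.
rewrite /mxtrace (bigD1 i0) //= big1 ?addr0 => [|i /negbTE ni]; first by rewrite mxE eqxx.
by rewrite mxE ni.
Qed.

Lemma mxtrace_base_F : \tr base_F = d%:R - 1.
Proof. by rewrite /base_F linearB /= mxtrace1 mxtrace_base_E. Qed.

Lemma diag_within_base_E : diag_within base_E 0 1.
Proof.
move=> i j; rewrite !mxE; split; last by case: (i == i0); rewrite /= ?lexx ?ler01.
move=> ij; case: eqP => [ei|_]; case: eqP => [ej|_] //=.
by move: ij; rewrite ei ej eqxx.
Qed.

Lemma diag_within_base_F : diag_within base_F 0 1.
Proof.
move=> i j; rewrite !mxE; split; last first.
  by rewrite eqxx; case: (i == i0); rewrite /= ?subrr ?subr0 ?lexx ?ler01.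
move=> ij; rewrite (negbTE ij) /= sub0r.
case: eqP => [ei|_]; case: eqP => [ej|_] /=; rewrite ?oppr0 //.
by move: ij; rewrite ei ej eqxx.
Qed.

Let base_simpl := (adj_base_E, adj_base_F, cconj_base_E, cconj_base_F,
  tr_base_E, tr_base_F, base_EE, base_EF, base_FE, base_FF).

Lemma diag_within_H1_base : diag_within (H1 base_E base_F) 1 (d%:R - 1).
Proof.
apply/diag_within_castmx/diag_within_kron1; rewrite ?ler01 //.
have d1 : 1 <= d%:R - 1 :> C by rewrite lerBrDr (_ : 1 + 1 = 2%:R) // ler_nat.
move=> [[|[|i]] hi] [[|[|j]] hj] //; rewrite !mxE /= /fnorm2 !base_simpl;
  by rewrite ?mxtrace_base_E ?mxtrace_base_F ?mxtrace0; split=> //; rewrite ?lexx ?d1.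
Qed.

Lemma diag_within_H2_base : diag_within (H2 base_E base_F) 0 1.
Proof.
rewrite /H2 !base_simpl; apply/diag_within_castmx/(diag_within_kron1 (lexx 0)).
exact: diag_within_block diag_within_base_E diag_within_base_F.
Qed.

Lemma diag_within_H3_base : diag_within (H3 base_E base_F) 0 1.
Proof.
rewrite /H3 !base_simpl !kron0; apply: diag_within_block;
  apply: diag_within_1kron (lexx 0) _; [exact: diag_within_base_E | exact: diag_within_base_F].
Qed.

Lemma Hmat_base_psd : psd (Hmat base_E base_F).
Proof.
move=> v; rewrite -[_ 0 0]/(mxform _ v v) /Hmat mxform_add mxform_scale.
apply: addr_ge0; last by rewrite mulr_ge0 ?invr_ge0 ?ler0n // H4_gram mxform_gram_ge0.
have entry n (A B D : 'M[C]_n) c i j :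
  (A - c *: (B + D)) i j = A i j - c * (B i j + D i j) by rewrite !mxE.
apply: mxform_diag_ge0 => [i j ij|i]; rewrite entry.
  have [H1ij _] := diag_within_H1_base i j; have [H2ij _] := diag_within_H2_base i j.
  have [H3ij _] := diag_within_H3_base i j.
  by rewrite H1ij // H2ij // H3ij // addr0 mulr0 subr0.
have [_ /andP[H1ii _]] := diag_within_H1_base i i.
have [_ /andP[_ H2ii]] := diag_within_H2_base i i.
have [_ /andP[_ H3ii]] := diag_within_H3_base i i.
rewrite subr_ge0; apply: le_trans H1ii.
rewrite -[X in _ <= X](@mulVf _ 2%:R) ?pnatr_eq0 // ler_wpM2l ?invr_ge0 ?ler0n //.
by rewrite -[2%:R]/(1 + 1 : C) lerD.
Qed.

End BasePoint.

Section AvoidingArc.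
Variable R : realType.
Local Notation C := R[i].

Definition arc (s t : R) : C := Complex t (s * t * (1 - t)).

Lemma arc0 s : arc s 0 = 0.
Proof. by rewrite /arc mulr0 mul0r. Qed.

Lemma arc1 s : arc s 1 = 1.
Proof. by rewrite /arc subrr mulr0. Qed.

Lemma arc_inj s s' t t' : 0 < t < 1 -> arc s t = arc s' t' -> s = s'.
Proof.
move=> /andP[t0 t1] [<-]; rewrite -!mulrA; apply: mulIf.
by apply: mulf_neq0; [exact: lt0r_neq0 | rewrite subr_eq0 gt_eqF].
Qed.

(* Distinct [s] give arcs meeting only at [t = 0] and [t = 1], so the finitely
   many roots of [p] cannot block more than [size p - 1] of the arcs. *)
Lemma exists_arc_avoiding (p : {poly C}) : p.[0] != 0 ->
  exists s : R, forall t, 0 <= t < 1 -> p.[arc s t] != 0.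
Proof.
move=> p0; apply: contrapT => /forallNP no_s.
have roots (k : 'I_(size p)) : exists t, (0 < t < 1) && root p (arc k%:R t).
  have [t /not_implyP [/andP[t0 t1] /negP/negPn pt]] := (existsNP _).2 (no_s k%:R).
  exists t; rewrite rootE pt t1 !andbT lt_def t0 andbT.
  by apply: contraTneq pt => ->; rewrite arc0.
have [tk htk] := fin_all_exists roots.
pose rs := [seq arc (val k)%:R (tk k) | k <- enum 'I_(size p)].
have p_neq0 : p != 0 by apply: contraNneq p0 => ->; rewrite horner0.
suff : (size rs < size p)%N by rewrite size_map size_enum_ord ltnn.
apply: max_poly_roots p_neq0 _ _.
  by apply/allP => _ /mapP[k _ ->]; have /andP[] := htk k.
rewrite map_inj_uniq ?enum_uniq // => k k' eq_arc; have /andP[tk01 _] := htk k.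
by apply/val_inj/eqP; rewrite -(eqr_nat R) (arc_inj tk01 eq_arc).
Qed.

End AvoidingArc.

Section GenericPath.
Variable R : realType.
Local Notation C := R[i].

Lemma lip01_arc (s : R) : lip01 (fun t => arc s t).
Proof.
have arcE t : arc s t = t%:C%C + 'i%C * (s%:C%C * t%:C%C * (1 - t%:C%C)).
  by apply/eqP; rewrite eq_complex /=; simpc.
apply: lip01_ext (fun t => esym (arcE t)) _.
apply: lip01D; first exact: lip01_id.
apply: lip01M; first exact: lip01_cst.
apply: lip01M; first by apply: lip01M; [exact: lip01_cst | exact: lip01_id].
by apply: lip01B; [exact: lip01_cst | exact: lip01_id].
Qed.

Variable d : nat.
Implicit Types X Y : 'M[C]_d.

Definition mx_lerp (A0 A1 : 'M[C]_d) (z : C) := (1 - z) *: A0 + z *: A1.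

Definition mx_lerp_poly (A0 A1 : 'M[C]_d) : 'M[{poly C}]_d :=
  \matrix_(i, j) ((A0 i j)%:P + 'X * (A1 i j - A0 i j)%:P).

Lemma mx_lerp0 A0 A1 : mx_lerp A0 A1 0 = A0.
Proof. by rewrite /mx_lerp subr0 scale1r scale0r addr0. Qed.

Lemma mx_lerp1 A0 A1 : mx_lerp A0 A1 1 = A1.
Proof. by rewrite /mx_lerp subrr scale0r scale1r add0r. Qed.

Lemma horner_mx_lerp_poly A0 A1 z i j : (mx_lerp_poly A0 A1 i j).[z] = mx_lerp A0 A1 z i j.
Proof. by rewrite !mxE hornerD hornerM hornerX !hornerC; ring. Qed.

Lemma horner_det_mx_lerp_poly A0 A1 B0 B1 z :
  (\det (mx_lerp_poly A0 A1 + mx_lerp_poly B0 B1)).[z] =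
  \det (mx_lerp A0 A1 z + mx_lerp B0 B1 z).
Proof.
rewrite -horner_evalE -det_map_mx; congr (\det _); apply/matrixP => i j.
by rewrite !mxE /= horner_evalE !(hornerD, hornerM, hornerX, hornerC); ring.
Qed.

Lemma mxlip01_lerp_arc (s : R) A0 A1 : mxlip01 (fun t => mx_lerp A0 A1 (arc s t)).
Proof.
apply: mxlip01D; apply: mxlip01Z (mxlip01_cst _); last exact: lip01_arc.
exact: lip01B (lip01_cst _) (lip01_arc s).
Qed.

Lemma generic_of_minor (i0 i1 : 'I_d) X Y :
  \det (X + Y) * (X i0 i0 * Y i1 i1 - X i1 i1 * Y i0 i0) != 0 -> generic X Y.
Proof.
rewrite mulf_eq0 negb_or => /andP[detXY minor].
split; last by exists 1, 1; rewrite !scale1r.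
move=> a b /matrixP abXY; have := abXY i0 i0; have := abXY i1 i1; rewrite !mxE => e1 e0.
set m := _ - _ in minor.
have minor_a : a * m = 0.
  have -> : a * m = Y i1 i1 * (a * X i0 i0 + b * Y i0 i0)
                    - Y i0 i0 * (a * X i1 i1 + b * Y i1 i1) by rewrite /m; ring.
  by rewrite e0 e1 !mulr0 subrr.
have minor_b : b * m = 0.
  have -> : b * m = X i0 i0 * (a * X i1 i1 + b * Y i1 i1)
                    - X i1 i1 * (a * X i0 i0 + b * Y i0 i0) by rewrite /m; ring.
  by rewrite e0 e1 !mulr0 subrr.
by split; apply/eqP; [move: minor_a | move: minor_b] => /eqP;
  rewrite mulf_eq0 (negbTE minor) orbF.
Qed.

Lemma exists_generic_arc (i0 i1 : 'I_d) X Y : i0 != i1 ->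
  exists s, forall t, 0 <= t < 1 ->
  generic (mx_lerp (base_E R i0) X (arc s t)) (mx_lerp (base_F R i0) Y (arc s t)).
Proof.
move=> i01; pose WX := mx_lerp (base_E R i0) X; pose WY := mx_lerp (base_F R i0) Y.
pose PX := mx_lerp_poly (base_E R i0) X; pose PY := mx_lerp_poly (base_F R i0) Y.
pose p := \det (PX + PY) * (PX i0 i0 * PY i1 i1 - PX i1 i1 * PY i0 i0).
have pE z : p.[z] = \det (WX z + WY z) * (WX z i0 i0 * WY z i1 i1 - WX z i1 i1 * WY z i0 i0).
  by rewrite hornerM horner_det_mx_lerp_poly hornerD hornerN !hornerM !horner_mx_lerp_poly.
have p0 : p.[0] != 0.
  have i10 : (i1 == i0) = false by rewrite eq_sym (negbTE i01).
  rewrite pE /WX /WY !mx_lerp0 /base_F addrC subrK det1 mul1r !mxE !eqxx i10 /=.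
  by rewrite subrr subr0 mul0r mulr1 subr0 oner_eq0.
have [s s_avoids] := exists_arc_avoiding p0.
by exists s => t t01; apply: (generic_of_minor (i0 := i0) (i1 := i1)); rewrite -pE s_avoids.
Qed.

End GenericPath.

Theorem proposition6p2 (R : realType) (d : nat) (hd : (3 <= d)%N) :
  (forall X Y : 'M[R[i]]_d, generic X Y -> \det (Hmat X Y) != 0) ->
  forall X Y : 'M[R[i]]_d, psd (Hmat X Y).
Proof.
move=> det_generic X Y; have d_gt1 : (1 < d)%N := ltnW hd.
pose i0 : 'I_d := Ordinal (ltnW d_gt1); pose i1 : 'I_d := Ordinal d_gt1.
have [s s_generic] := @exists_generic_arc R d i0 i1 X Y isT.
pose W t := Hmat (mx_lerp (base_E R i0) X (arc s t)) (mx_lerp (base_F R i0) Y (arc s t)).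
have [L L_ge0 W_lipschitz] := mxlip01_uniform (mxlip01_Hmat
  (mxlip01_lerp_arc s (base_E R i0) X) (mxlip01_lerp_arc s (base_F R i0) Y)).
have W0 : psd (W 0) by rewrite /W arc0 !mx_lerp0; exact: Hmat_base_psd.
have := psd_path_end (Hf := W) (fun t => Hmat_hermitian _ _) L_ge0 W_lipschitz _ W0.
rewrite /W arc1 !mx_lerp1; apply=> t t01; exact/det_generic/s_generic.
Qed.
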